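(* If $f\in\mathcal F_{\mathrm{CSSA}}$ (with witnesses $Y_\ell,p_\ell,r_\ell,C_\ell,f_\ell,F_\ell,D_\ell$ as in the definition), then $f\log_+f\in\mathcal L^1(\mathbb{R}^d)$; more precisely $$\int_{\mathbb{R}^d}f(y)\log_+f(y)\,\mathrm{d}y\le\sum_{\ell:p_\ell>0}p_\ell\int_{Y_\ell}D_\ell(y)\,\mathrm{d}F_\ell(y)+d\sum_{\ell:p_\ell>0}p_\ell\log_+\!\Big(\frac{2}{r_\ell}\Big)<\infty.$$
   Context: $\log_+t=\max\{\log t,0\}$ for $t>0$, $\log_+0=0$. Densities are w.r.t. Lebesgue measure; $F(A)=\int_Af\,\mathrm{d}x$; $\operatorname{supp}(f)=\{x:f(x)>0\}$. Comparison cubes are closed axis-aligned cubes; partition cubes may be half-open so as to be disjoint. ''A cube of side $r$ with a vertex at $y$'' means a closed axis-aligned cube of side length $r$ having $y$ as one of its vertices. A family of cubes of common side length is adjacent if they have pairwise disjoint interiors and the union of their closures is connected. Definition ($\mathcal F_{\mathrm{FSSA}}$): a density $f$ on $\mathbb{R}^d$ belongs to $\mathcal F_{\mathrm{FSSA}}$ if there exist, for each $m\ge1$, a partition $\operatorname{supp}(f)=A^{(m)}_0\sqcup A^{(m)}_1\sqcup\cdots\sqcup A^{(m)}_m$ in which $A^{(m)}_1,\dots,A^{(m)}_m$ are adjacent cubes of common side length $h_m>0$ and $A^{(m)}_0$ is the remainder, such that: (i) $f$ is continuous on $\operatorname{supp}(f)$ except on a set of $F$-measure zero; (ii) there exist $r>0$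 and, for every $y\in\operatorname{supp}(f)$, a comparison cube $C(r,y)$ of side length $r$ containing $y$, such that $D_r(y)=\log\big(f(y)/\inf_{z\in C(r,y)}f(z)\big)$ is measurable on $\operatorname{supp}(f)$ and $\int_{\operatorname{supp}(f)}D_r\,\mathrm{d}F<\infty$; (iii) there exists $M\in\mathbb N$ such that for every $m\ge M$: (a) if $y\in A^{(m)}_0$ then $C(r,y)\cap A^{(m)}_0$ contains a cube of side $r/2$ with a vertex at $y$; (b) if $y\in\operatorname{supp}(f)\setminus A^{(m)}_0$ then $C(r,y)\cap(\operatorname{supp}(f)\setminus A^{(m)}_0)$ contains a cube of side $r/2$ with a vertex at $y$. Definition ($\mathcal F_{\mathrm{CSSA}}$): a density $f$ belongs to $\mathcal F_{\mathrm{CSSA}}$ if there exist a measurable partition $\operatorname{supp}(f)=\bigsqcup_{\ell\ge1}Y_\ell$ with $p_\ell=F(Y_\ell)$, and, for each $\ell$ with $p_\ell>0$, a scale $r_\ell>0$, comparison cubes $C_\ell(y)$ of side $r_\ell$ containing $y$ ($y\in Y_\ell$), and for every $m\ge1$ a partition $Y_\ell=A^{(m)}_{\ell,0}\sqcup\cdots\sqcup A^{(m)}_{\ell,m}$ with $A^{(m)}_{\ell,1},\dots,A^{(m)}_{\ell,m}$ adjacent cubes of common side $h_{\ell,m}>0$, such that for each $\ell$ with $p_\ell>0$ the normalized restriction $f_\ell=f\mathbf 1_{Y_\ell}/p_\ell$ satisfies the definition of $\mathcal F_{\mathrm{FSSA}}$ with these witnesses (scale $r_\ell$, cubes $C_\ell(y)$,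 these partitions), and, with $F_\ell$ the law of density $f_\ell$ and $D_\ell(y)=\log\big(f_\ell(y)/\inf_{z\in C_\ell(y)}f_\ell(z)\big)$ for $y\in Y_\ell$, one has $\sum_{\ell:p_\ell>0}p_\ell\int_{Y_\ell}D_\ell\,\mathrm{d}F_\ell<\infty$ and $\sum_{\ell:p_\ell>0}p_\ell\log_+(1/r_\ell)<\infty$. *)

(* Points of R^d are d-tuples of reals (d.-tuple R),
   which carry the product (= Borel) sigma-algebra of MathComp-Analysis. *)
From HB Require Import structures.
From mathcomp Require Import all_boot all_order all_algebra.
From mathcomp Require Import all_classical all_reals all_analysis measurable_realfun.
Set Implicit Arguments. Unset Strict Implicit. Unset Printing Implicit Defensive.
Import Order.TTheory GRing.Theory Num.Theory.
Import numFieldNormedType.Exports.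
Local Open Scope classical_set_scope.
Local Open Scope ring_scope.

Section Defs.
Variables (R : realType) (d : nat).
Notation pt := (d.-tuple R).

Definition logp (t : R) : R := if t <= 1 then 0 else ln t.

(* mu is Lebesgue measure on R^d: it gives every closed box its volume.
   (This determines mu uniquely on the Borel sets.) *)
Definition is_lebesgue (mu : {measure set pt -> \bar R}) : Prop :=
  forall a b : pt, (forall i, tnth a i <= tnth b i) ->
    mu [set x | forall i, tnth a i <= tnth x i <= tnth b i]
    = (\prod_(i < d) (tnth b i - tnth a i))%:E.

Definition density (mu : {measure set pt -> \bar R}) (f : pt -> R) : Prop :=
  (forall x, 0 <= f x) /\ measurable_fun setT f /\
  (\int[mu]_x (f x)%:E = 1)%E.

Definition supp (f : pt -> R) : set pt := [set x | 0 < f x].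

Definition law (mu : {measure set pt -> \bar R}) (f : pt -> R) (A : set pt) : \bar R :=
  (\int[mu]_(x in A) (f x)%:E)%E.

Definition ccube (a : pt) (s : R) : set pt :=
  [set x | forall i, tnth a i <= tnth x i <= tnth a i + s].

Definition ocube (a : pt) (s : R) : set pt :=
  [set x | forall i, tnth a i < tnth x i < tnth a i + s].

(* a cube of side s with lower corner a, each face possibly included or not
   (closed, half-open, ...) *)
Definition cube_piece (Q : set pt) (a : pt) (s : R) : Prop :=
  exists bl br : 'I_d -> bool,
    Q = [set x | forall i, tnth x i \in
                   Interval (BSide (bl i) (tnth a i)) (BSide (br i) (tnth a i + s))].

(* "a cube of side s with a vertex at y" is ccube a s with this property *)
Definition vertex_at (y a : pt) (s : R) : Prop :=
  forall i, tnth y i = tnth a i \/ tnth y i = tnth a i + s.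

(* the standard homeomorphic copy of R^d as a product topological space *)
Definition tof (x : pt) : {ptws 'I_d -> R} := fun i => tnth x i.

Definition idx (m : nat) : set nat := [set j | (1 <= j <= m)%N].

Definition adjacent (Q : nat -> set pt) (m : nat) (s : R) : Prop :=
  exists a : nat -> pt,
    (forall j, idx m j -> cube_piece (Q j) (a j) s) /\
    (forall j k, idx m j -> idx m k -> j <> k -> ocube (a j) s `&` ocube (a k) s = set0) /\
    connected (tof @` \bigcup_(j in idx m) ccube (a j) s).

Definition cube_partition (S : set pt) (m : nat) (Q : nat -> set pt) (s : R) : Prop :=
  0 < s /\ adjacent Q m s /\
  (forall j, idx m j -> Q j `<=` S) /\
  (forall j k, idx m j -> idx m k -> j <> k -> Q j `&` Q k = set0) /\
  Q 0%N = S `\` \bigcup_(j in idx m) Q j.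

Definition rel_continuous_at (f : pt -> R) (S : set pt) (y : pt) : Prop :=
  forall e : R, 0 < e -> exists2 del : R, 0 < del &
    forall z, S z -> (forall i, `|tnth z i - tnth y i| < del) -> `|f z - f y| < e.

Definition Dfun (f : pt -> R) (r : R) (c : pt -> pt) (y : pt) : \bar R :=
  let i := ereal_inf [set (f z)%:E | z in ccube (c y) r] in
  if (0 < i)%E then (ln (f y / fine i))%:E else +oo%E.

(* f in F_FSSA with the given witnesses: partitions A m (pieces A m 0 .. A m m)
   with cube side h m, scale r and comparison cubes ccube (c y) r *)
Definition FSSA_with (mu : {measure set pt -> \bar R}) (f : pt -> R)
    (A : nat -> nat -> set pt) (h : nat -> R) (r : R) (c : pt -> pt) : Prop :=
  density mu f /\
  (forall m, (1 <= m)%N -> cube_partition (supp f) m (A m) (h m)) /\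
  (exists N : set pt, measurable N /\ law mu f N = 0%E /\
     forall y, supp f y -> ~ N y -> rel_continuous_at f (supp f) y) /\
  0 < r /\ (forall y, supp f y -> ccube (c y) r y) /\
  measurable_fun (supp f) (Dfun f r c) /\
  (\int[mu]_(y in supp f) (Dfun f r c y * (f y)%:E) < +oo)%E /\
  (exists M : nat, forall m, (1 <= m)%N -> (M <= m)%N -> forall y,
     (A m 0%N y -> exists a, vertex_at y a (r / 2) /\
         ccube a (r / 2) `<=` ccube (c y) r `&` A m 0%N) /\
     (supp f y -> ~ A m 0%N y -> exists a, vertex_at y a (r / 2) /\
         ccube a (r / 2) `<=` ccube (c y) r `&` (supp f `\` A m 0%N))).

Definition FSSA (mu : {measure set pt -> \bar R}) (f : pt -> R) : Prop :=
  exists A h r c, FSSA_with mu f A h r c.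

Definition pw (mu : {measure set pt -> \bar R}) (f : pt -> R) (Y : nat -> set pt) (l : nat) : R :=
  fine (law mu f (Y l)).

Definition fl (mu : {measure set pt -> \bar R}) (f : pt -> R) (Y : nat -> set pt) (l : nat) : pt -> R :=
  fun y => f y * \1_(Y l) y / pw mu f Y l.

Definition sumD (mu : {measure set pt -> \bar R}) (f : pt -> R) (Y : nat -> set pt)
    (r : nat -> R) (c : nat -> pt -> pt) : \bar R :=
  (\sum_(l <oo | (0 < pw mu f Y l)%R)
     ((pw mu f Y l)%:E *
      \int[mu]_(y in Y l) (Dfun (fl mu f Y l) (r l) (c l) y * (fl mu f Y l y)%:E)))%E.

Definition sumlog (mu : {measure set pt -> \bar R}) (f : pt -> R) (Y : nat -> set pt)
    (r : nat -> R) (k : R) : \bar R :=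
  (\sum_(l <oo | (0 < pw mu f Y l)%R) (pw mu f Y l * logp (k / r l))%:E)%E.

Definition CSSA_with (mu : {measure set pt -> \bar R}) (f : pt -> R)
    (Y : nat -> set pt) (r : nat -> R) (c : nat -> pt -> pt)
    (A : nat -> nat -> nat -> set pt) (h : nat -> nat -> R) : Prop :=
  density mu f /\
  (forall l, measurable (Y l)) /\
  (forall l k, l <> k -> Y l `&` Y k = set0) /\
  \bigcup_l Y l = supp f /\
  (forall l, 0 < pw mu f Y l ->
     (forall m, (1 <= m)%N -> cube_partition (Y l) m (A l m) (h l m)) /\
     FSSA_with mu (fl mu f Y l) (A l) (h l) (r l) (c l)) /\
  (sumD mu f Y r c < +oo)%E /\
  (sumlog mu f Y r 1 < +oo)%E.

End Defs.

From HB Require Import structures.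
From mathcomp Require Import all_boot all_order all_algebra.
From mathcomp Require Import all_classical all_reals all_analysis measurable_realfun.
From mathcomp Require Import ring lra.
Set Implicit Arguments. Unset Strict Implicit. Unset Printing Implicit Defensive.
Import Order.TTheory GRing.Theory Num.Theory.
Import numFieldNormedType.Exports.
Local Open Scope classical_set_scope.
Local Open Scope ring_scope.

(* Split the integral of f log_+ f along the pieces Y_l, on which f = p_l f_l.
   For y in Y_l let m be the infimum of f_l over the comparison cube C_l(y), so
   that D_l(y) = log (f_l(y) / m).  As f_l is a probability density and
   f_l >= m on a cube of volume r_l^d, m r_l^d <= 1; hence
   log f_l(y) = D_l(y) + log m <= D_l(y) - d log r_l <= D_l(y) + d log_+ (2 / r_l),
   and since the right-hand side is nonnegative it also bounds
   log_+ (p_l f_l(y)) <= log_+ f_l(y).  Integrating against f = p_l f_l and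
   summing over l gives the bound; it is finite because
   log_+ (2 / r) <= log_+ (1 / r) + log 2 and the p_l sum to at most 1. *)

Section Logp.
Variable R : realType.

Lemma logp_ge0 (x : R) : 0 <= logp x.
Proof. by rewrite /logp; case: (lerP x 1) => // x1; exact: ltW (ln_gt0 x1). Qed.

Lemma logpE (x : R) : logp x = ln (Num.max x 1).
Proof.
rewrite /logp; case: ifPn => x1; first by rewrite max_r // ln1.
by rewrite max_l // ltW // ltNge.
Qed.

Lemma measurable_logp : measurable_fun setT (@logp R).
Proof.
rewrite (_ : @logp R = fun t => ln (Num.max t 1)); last exact/funext/logpE.
by apply: measurableT_comp; [exact: measurable_ln | exact: measurable_maxr].
Qed.

Lemma ln_le_logp (x : R) : 0 < x -> ln x <= logp x.
Proof.
move=> x0; rewrite logpE ler_ln ?posrE ?le_max ?lexx ?orbT //.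
by rewrite lt_max x0.
Qed.

Lemma ler_logp (x y : R) : 0 < x -> x <= y -> logp x <= logp y.
Proof.
move=> x0 xy; rewrite !logpE ler_ln ?posrE ?lt_max ?ltr01 ?orbT //.
by rewrite ge_max !le_max xy lexx /= orbT.
Qed.

Lemma logp_le (x B : R) : 0 < x -> 0 <= B -> ln x <= B -> logp x <= B.
Proof. by move=> x0 B0 lB; rewrite /logp; case: ifPn. Qed.

Lemma logpM2 (x : R) : 0 < x -> logp (2 * x) <= logp x + ln 2.
Proof.
move=> x0; apply: logp_le; first by rewrite mulr_gt0.
  by rewrite addr_ge0 ?logp_ge0 // ln_ge0 // ler1n.
by rewrite lnM ?posrE // addrC lerD // ln_le_logp.
Qed.

Lemma lnN_le_logp (s : R) : 0 < s -> - ln s <= logp (2 / s).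
Proof.
move=> s0; have := ln_le_logp (divr_gt0 (ltr0n R 2) s0); apply: le_trans.
rewrite -lnV ?posrE // ler_ln ?posrE ?invr_gt0 ?divr_gt0 //.
by rewrite ler_pdivlMr // mulVf ?gt_eqF // ler1n.
Qed.

Lemma mul_logp_le (d : nat) (p g m s : R) :
  0 < p -> p <= 1 -> 0 < m -> m <= g -> 0 < s -> m * s ^+ d <= 1 ->
  p * g * logp (p * g) <= p * g * (ln (g / m) + d%:R * logp (2 / s)).
Proof.
move=> p0 p1 m0 mg s0 ms.
have g0 : 0 < g by apply: lt_le_trans mg.
apply: ler_wpM2l; first by rewrite mulr_ge0 // ltW.
apply: (@le_trans _ _ (logp g)).
  by apply: ler_logp; [rewrite mulr_gt0 | rewrite ler_piMl // ltW].
have lgm : 0 <= ln (g / m) by apply: ln_ge0; rewrite ler_pdivlMr // mul1r.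
apply: logp_le => //; first by rewrite addr_ge0 // mulr_ge0 // logp_ge0.
have lnms : ln m + d%:R * ln s <= 0.
  by rewrite mulr_natl -lnXn // -lnM ?posrE ?exprn_gt0 // ln_le0.
have : d%:R * - ln s <= d%:R * logp (2 / s) by rewrite ler_wpM2l // lnN_le_logp.
by rewrite ln_div ?posrE //; lra.
Qed.

End Logp.

Section Cube.
Variables (R : realType) (d : nat).
Notation pt := (d.-tuple R).

Lemma ccube_measurable (a : pt) (s : R) : measurable (ccube a s).
Proof.
have -> : ccube a s = \bigcap_(i in [set: 'I_d])
   ((fun x : pt => tnth x i) @^-1` `[tnth a i, tnth a i + s]%classic).
  apply/seteqP; split => x /=.
    by move=> H i _ /=; rewrite in_itv /=; exact: H.
  by move=> H i; have := H i I; rewrite /= in_itv.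
apply: fin_bigcap_measurable; first exact: finite_finset.
move=> i _; rewrite -[X in measurable X]setTI.
by apply: measurable_tnth => //; exact: measurable_itv.
Qed.

Variable mu : {measure set pt -> \bar R}.
Hypothesis Hmu : is_lebesgue mu.

Lemma lebesgue_ccube (a : pt) (s : R) : 0 <= s -> mu (ccube a s) = (s ^+ d)%:E.
Proof.
move=> s0; pose b : pt := [tuple tnth a i + s | i < d].
have ab i : tnth a i <= tnth b i by rewrite tnth_mktuple lerDl.
have := Hmu ab; rewrite /b; under eq_bigr do rewrite tnth_mktuple addrAC subrr add0r.
rewrite prodr_const card_ord => <-.
by congr (mu _); apply/seteqP; split => x /= H i; have := H i; rewrite ?tnth_mktuple.
Qed.

Lemma density_lb_ccube (g : pt -> R) (a : pt) (s m : R) :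
  density mu g -> 0 <= s -> 0 <= m ->
  (forall z, ccube a s z -> m <= g z) -> m * s ^+ d <= 1.
Proof.
move=> [g0 [mg ig]] s0 m0 Hm.
rewrite -lee_fin -ig EFinM -(lebesgue_ccube a s0) -integral_cst; last exact: ccube_measurable.
apply: (@le_trans _ _ (\int[mu]_(x in ccube a s) (g x)%:E)%E).
  apply: ge0_le_integral => //; try exact: ccube_measurable.
  by apply/measurableT_comp => //; apply: measurable_funS mg => //; exact: ccube_measurable.
apply: (ge0_subset_integral _ (ccube_measurable a s) measurableT) => //.
  exact: measurableT_comp.
by move=> x _; rewrite lee_fin.
Qed.

Lemma DfunP (g : pt -> R) (s : R) (c : pt -> pt) (y : pt) :
  ccube (c y) s y ->
  Dfun g s c y = +oo%E \/
  exists m : R, [/\ 0 < m, m <= g y, (forall z, ccube (c y) s z -> m <= g z) &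
                 Dfun g s c y = (ln (g y / m))%:E].
Proof.
move=> Cy; rewrite /Dfun; set i := ereal_inf _.
have ilb z : ccube (c y) s z -> (i <= (g z)%:E)%E.
  by move=> Cz; apply: ereal_inf_lbound; exists z.
case: ifPn => ip; [right | by left].
have ifin : i \is a fin_num.
  by rewrite ge0_fin_numE ?(ltW ip) // (le_lt_trans (ilb _ Cy)) // ltey.
exists (fine i); split => //.
- by rewrite -lte_fin fineK.
- by rewrite -lee_fin fineK // ilb.
- by move=> z Cz; rewrite -lee_fin fineK // ilb.
Qed.

Lemma Dfun_ge0 (g : pt -> R) (s : R) (c : pt -> pt) (y : pt) :
  ccube (c y) s y -> 0 < g y -> (0 <= Dfun g s c y)%E.
Proof.
move=> Cy gy; case: (DfunP g Cy) => [-> // | [m [m0 mg _ ->]]].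
by rewrite lee_fin ln_ge0 // ler_pdivlMr // mul1r.
Qed.

End Cube.

Section CSSA.
Variables (R : realType) (d : nat).
Notation pt := (d.-tuple R).
Variables (mu : {measure set pt -> \bar R}) (f : pt -> R) (Y : nat -> set pt)
  (r : nat -> R) (c : nat -> pt -> pt) (A : nat -> nat -> nat -> set pt)
  (h : nat -> nat -> R).
Hypothesis Hmu : is_lebesgue mu.
Hypothesis Hf : CSSA_with mu f Y r c A h.

Local Notation p l := (pw mu f Y l).
Local Notation f_ l := (fl mu f Y l).
Local Notation flogp := (fun y => (f y * logp (f y))%:E).

Lemma f_density : density mu f. Proof. by case: Hf. Qed.

Lemma f_ge0 x : 0 <= f x. Proof. by case: f_density. Qed.

Lemma measurable_fE : measurable_fun setT (fun x => (f x)%:E).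
Proof. by case: f_density => _ [mf _]; exact: measurableT_comp. Qed.

Lemma measurable_flogp : measurable_fun setT flogp.
Proof.
case: f_density => _ [mf _]; apply: measurableT_comp => //.
apply: measurable_funM => //; apply: measurableT_comp => //; exact: measurable_logp.
Qed.

Lemma flogp_ge0 y : (0 <= flogp y)%E.
Proof. by rewrite lee_fin mulr_ge0 ?f_ge0 ?logp_ge0. Qed.

Lemma measurable_Y l : measurable (Y l). Proof. by case: Hf => _ []. Qed.

Lemma trivIset_Y : trivIset setT Y.
Proof.
case: Hf => _ [_ [disj _]] i j _ _ [x [Yi Yj]]; apply: contrapT => ij.
by have := disj _ _ ij; rewrite -subset0 => /(_ x); apply.
Qed.

Lemma bigcup_Y : \bigcup_l Y l = supp f. Proof. by case: Hf => _ [_ [_ []]]. Qed.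

Lemma Y_gt0 l x : Y l x -> 0 < f x.
Proof. by move=> Yx; have : supp f x by rewrite -bigcup_Y; exists l. Qed.

Lemma law_Y_ge0 l : (0 <= law mu f (Y l))%E.
Proof. by apply: integral_ge0 => x _; rewrite lee_fin f_ge0. Qed.

Lemma law_Y_le1 l : (law mu f (Y l) <= 1)%E.
Proof.
case: f_density => _ [_ <-].
apply: (ge0_subset_integral _ (measurable_Y l) measurableT) => //.
  exact: measurable_fE.
by move=> x _; rewrite lee_fin f_ge0.
Qed.

Lemma pwE l : (p l)%:E = law mu f (Y l).
Proof. by rewrite fineK // ge0_fin_numE ?law_Y_ge0 // (le_lt_trans (law_Y_le1 l)) ?ltry. Qed.

Lemma pw_ge0 l : 0 <= p l. Proof. by rewrite -lee_fin pwE law_Y_ge0. Qed.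

Lemma pw_le1 l : p l <= 1. Proof. by rewrite -lee_fin pwE law_Y_le1. Qed.

Lemma sum_pw_le1 : (\sum_(l <oo) (p l)%:E <= 1)%E.
Proof.
have f0 x : (0 <= (f x)%:E)%E by rewrite lee_fin f_ge0.
under eq_eseriesr do rewrite pwE.
rewrite /law -(ge0_integral_bigcup mu measurable_Y _ _ trivIset_Y) //; last first.
  exact: measurable_funS measurable_fE.
case: f_density => _ [_ <-]; apply: ge0_subset_integral => //.
- by apply: bigcupT_measurable => l; exact: measurable_Y.
- exact: measurable_fE.
Qed.

(* f > 0 on Y_l, so F(Y_l) = 0 forces Y_l to be Lebesgue-null. *)
Lemma pw_eq0_null l : p l = 0 -> mu (Y l) = 0%E.
Proof.
move=> p0; have : (\int[mu]_(x in Y l) `|(f x)%:E| = 0)%E.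
  rewrite -[RHS](_ : law mu f (Y l) = 0)%E; last by rewrite -pwE p0.
  by apply: eq_integral => x _; rewrite gee0_abs // lee_fin f_ge0.
move/ae_eq_integral_abs => /(_ (measurable_Y l) (measurable_funS measurableT (subsetT _) measurable_fE)).
case=> N [mN N0 subN]; apply/eqP; rewrite eq_le measure_ge0 andbT -N0.
apply: le_measure; rewrite ?inE //; first exact: measurable_Y.
move=> x Yx; apply: subN => /= /(_ Yx) /eqP; rewrite eqe => /eqP fx.
by have := Y_gt0 Yx; rewrite fx ltxx.
Qed.

Lemma integral_flogp_eseries :
  (\int[mu]_y flogp y = \sum_(l <oo) \int[mu]_(y in Y l) flogp y)%E.
Proof.
rewrite -(ge0_integral_bigcup mu measurable_Y _ (fun y _ => flogp_ge0 y) trivIset_Y);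
  last exact: measurable_funS measurable_flogp.
rewrite [RHS]integral_mkcond; apply: eq_integral => x _.
rewrite patchE bigcup_Y; case: ifPn => // /negP xY.
have -> : f x = 0.
  by apply/eqP; rewrite eq_le f_ge0 andbT leNgt; apply/negP => fx; apply/xY/mem_set.
by rewrite mul0r.
Qed.

Lemma integral_flogp_null_piece l :
  ~~ (0 < p l) -> (\int[mu]_(y in Y l) flogp y = 0)%E.
Proof.
move=> Pl; have p0 : p l = 0 by apply/eqP; rewrite eq_le pw_ge0 andbT leNgt.
rewrite -(integral_abs_eq0 (measurable_Y l)
  (measurable_funS measurableT (subsetT _) measurable_flogp) (pw_eq0_null p0)).
by apply: eq_integral => x _; rewrite gee0_abs ?flogp_ge0.
Qed.

Lemma piece_FSSA l : 0 < p l -> FSSA_with mu (f_ l) (A l) (h l) (r l) (c l).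
Proof. by case: Hf => _ [_ [_ [_ [Hl _]]]] /Hl []. Qed.

Lemma r_gt0 l : 0 < p l -> 0 < r l.
Proof. by case/piece_FSSA => _ [_ [_ []]]. Qed.

Lemma flE l y : Y l y -> f_ l y = f y / p l.
Proof. by move=> Yy; rewrite /fl /indic mem_set // mulr1. Qed.

Lemma fl_gt0 l y : 0 < p l -> Y l y -> 0 < f_ l y.
Proof. by move=> Pl Yy; rewrite flE // divr_gt0 // (Y_gt0 Yy). Qed.

Lemma supp_fl l : 0 < p l -> supp (f_ l) = Y l.
Proof.
move=> Pl; apply/seteqP; split => y /=; last exact: fl_gt0.
rewrite /supp /fl /indic /=; case: (boolP (y \in Y l)) => [/set_mem // | _].
by rewrite mulr0n mulr0 mul0r ltxx.
Qed.

Lemma fl_ccube l y : 0 < p l -> Y l y -> ccube (c l y) (r l) y.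
Proof.
move=> Pl Yy; have [_ [_ [_ [_ [Cy _]]]]] := piece_FSSA Pl.
by apply: Cy; rewrite supp_fl.
Qed.

Lemma Dfun_fl_ge0 l y : 0 < p l -> Y l y ->
  (0 <= Dfun (f_ l) (r l) (c l) y * (f_ l y)%:E)%E.
Proof.
move=> Pl Yy; apply: mule_ge0; first exact: Dfun_ge0 (fl_ccube Pl Yy) (fl_gt0 Pl Yy).
by rewrite lee_fin ltW ?fl_gt0.
Qed.

Lemma flogp_le_Dfun l y : 0 < p l -> Y l y ->
  (flogp y <= (p l)%:E * (Dfun (f_ l) (r l) (c l) y * (f_ l y)%:E)
     + (d%:R * (p l * logp (2 / r l)))%:E * (f_ l y)%:E)%E.
Proof.
move=> Pl Yy; have [dens [_ [_ [r0 _]]]] := piece_FSSA Pl.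
have gy := fl_gt0 Pl Yy.
have -> : f y = p l * f_ l y by rewrite flE // mulrC divfK // gt_eqF.
case: (DfunP (f_ l) (fl_ccube Pl Yy)) => [-> | [m [m0 mgy mz ->]]].
  by rewrite gt0_mulye ?lte_fin // gt0_muley ?lte_fin // addye // leey.
rewrite -!EFinM -EFinD lee_fin.
have -> : p l * (ln (f_ l y / m) * f_ l y) + d%:R * (p l * logp (2 / r l)) * f_ l y
  = p l * f_ l y * (ln (f_ l y / m) + d%:R * logp (2 / r l)) by ring.
apply: mul_logp_le => //; first exact: pw_le1.
exact: density_lb_ccube Hmu _ _ _ _ dens (ltW r0) (ltW m0) mz.
Qed.

Lemma integral_flogp_piece l : 0 < p l ->
  (\int[mu]_(y in Y l) flogp y <=
     (p l)%:E * \int[mu]_(y in Y l) (Dfun (f_ l) (r l) (c l) y * (f_ l y)%:E)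
     + (d%:R)%:E * (p l * logp (2 / r l))%:E)%E.
Proof.
move=> Pl; have [dens [_ [_ [_ [_ [mD _]]]]]] := piece_FSSA Pl.
case: (dens) => [gl0 [mgl igl]]; have mYl := measurable_Y l.
rewrite supp_fl // in mD.
have mglE : measurable_fun (Y l) (fun y => (f_ l y)%:E).
  by apply: measurableT_comp => //; exact: measurable_funS mgl.
have mDg : measurable_fun (Y l) (fun y => Dfun (f_ l) (r l) (c l) y * (f_ l y)%:E)%E.
  exact: emeasurable_funM.
set K := d%:R * (p l * logp (2 / r l)).
have K0 : 0 <= K by rewrite mulr_ge0 // mulr_ge0 ?pw_ge0 ?logp_ge0.
apply: (@le_trans _ _ (\int[mu]_(y in Y l) ((p l)%:E *
    (Dfun (f_ l) (r l) (c l) y * (f_ l y)%:E) + K%:E * (f_ l y)%:E))%E).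
  apply: ge0_le_integral => //.
  - by move=> y _; exact: flogp_ge0.
  - exact: measurable_funS measurable_flogp.
  - by apply: emeasurable_funD; apply: emeasurable_funM.
  - by move=> y Yy; exact: flogp_le_Dfun.
rewrite ge0_integralD //; first last.
- exact: emeasurable_funM.
- by move=> y Yy; rewrite mule_ge0 // lee_fin ?gl0.
- exact: emeasurable_funM.
- by move=> y Yy; rewrite mule_ge0 ?Dfun_fl_ge0 // lee_fin ltW.
rewrite ge0_integralZl_EFin ?pw_ge0 //; last by move=> y Yy; exact: Dfun_fl_ge0.
rewrite ge0_integralZl_EFin //; last by move=> y _; rewrite lee_fin.
apply: leeD => //; rewrite -EFinM -/K -[X in (_ <= X)%E]mule1.
apply: lee_wpmul2l; first by rewrite lee_fin.
rewrite -igl; apply: ge0_subset_integral => //; first exact: measurableT_comp.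
by move=> y _; rewrite lee_fin.
Qed.

Lemma sumlog2_le : (sumlog mu f Y r 2 <= sumlog mu f Y r 1 + (ln 2)%:E)%E.
Proof.
have ln2_ge0 : (0 : R) <= ln 2 by rewrite ln_ge0 // ler1n.
apply: (@le_trans _ _ (\sum_(l <oo | (0 < p l)%R)
    ((p l * logp (1 / r l))%:E + (ln 2)%:E * (p l)%:E))%E).
  apply: lee_nneseries => [l _ Pl | l Pl]; first by rewrite lee_fin mulr_ge0 ?pw_ge0 ?logp_ge0.
  rewrite -EFinM -EFinD lee_fin (mulrC (ln 2)) -mulrDr ler_wpM2l ?pw_ge0 //.
  have -> : 2 / r l = 2 * (1 / r l) by rewrite mul1r.
  by rewrite logpM2 // divr_gt0 ?r_gt0.
rewrite nneseriesD; last 2 first.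
- by move=> l _ _; rewrite lee_fin mulr_ge0 ?pw_ge0 ?logp_ge0.
- by move=> l _ _; rewrite mule_ge0 // lee_fin pw_ge0.
rewrite (@nneseriesZl R (fun l => (p l)%:E)); last by move=> l _; rewrite lee_fin pw_ge0.
rewrite leeD // -[X in (_ <= X)%E]mule1 lee_wpmul2l ?lee_fin //.
apply: le_trans sum_pw_le1; rewrite eseries_mkcond.
by apply: lee_nneseries => [l _ _ | l _]; case: ifPn => // _; rewrite lee_fin pw_ge0.
Qed.

Lemma sumlog2_ge0 : (0 <= sumlog mu f Y r 2)%E.
Proof. by apply: nneseries_ge0 => l _ _; rewrite lee_fin mulr_ge0 ?pw_ge0 ?logp_ge0. Qed.

Lemma sumD_add_sumlog2_lty : (sumD mu f Y r c + (d%:R)%:E * sumlog mu f Y r 2 < +oo)%E.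
Proof.
case: Hf => _ [_ [_ [_ [_ [sD sL]]]]].
have : sumlog mu f Y r 2 \is a fin_num.
  by rewrite ge0_fin_numE ?sumlog2_ge0 // (le_lt_trans sumlog2_le) // lte_add_pinfty ?ltry.
by move/fineK <-; rewrite -EFinM lte_add_pinfty ?ltry.
Qed.

Lemma integral_flogp_le :
  (\int[mu]_y flogp y <= sumD mu f Y r c + (d%:R)%:E * sumlog mu f Y r 2)%E.
Proof.
rewrite integral_flogp_eseries /sumD /sumlog -nneseriesZl; last first.
  by move=> l _; rewrite lee_fin mulr_ge0 ?pw_ge0 ?logp_ge0.
rewrite -nneseriesD; last 2 first.
- move=> l _ Pl; rewrite mule_ge0 ?lee_fin ?pw_ge0 //.
  by apply: integral_ge0 => y Yy; exact: Dfun_fl_ge0.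
- by move=> l _ _; rewrite mule_ge0 // lee_fin mulr_ge0 ?pw_ge0 ?logp_ge0.
rewrite [X in (_ <= X)%E]eseries_mkcond.
apply: (@lee_nneseries R _ _ xpredT) => [l _ _ | l _].
  by apply: integral_ge0 => x _; exact: flogp_ge0.
by case: ifPn => Pl; [exact: integral_flogp_piece | rewrite integral_flogp_null_piece].
Qed.

End CSSA.

Theorem mainTheorem12 (R : realType) (d : nat)
    (mu : {measure set (d.-tuple R) -> \bar R}) (Hmu : is_lebesgue mu)
    (f : d.-tuple R -> R) (Y : nat -> set (d.-tuple R)) (r : nat -> R)
    (c : nat -> d.-tuple R -> d.-tuple R)
    (A : nat -> nat -> nat -> set (d.-tuple R)) (h : nat -> nat -> R)
    (Hf : CSSA_with mu f Y r c A h) :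
  mu.-integrable setT (fun y => (f y * logp (f y))%:E) /\
  (\int[mu]_y (f y * logp (f y))%:E
     <= sumD mu f Y r c + (d%:R)%:E * sumlog mu f Y r 2)%E /\
  (sumD mu f Y r c + (d%:R)%:E * sumlog mu f Y r 2 < +oo)%E.
Proof.
have bound := integral_flogp_le Hmu Hf.
have fin := sumD_add_sumlog2_lty Hf.
split; last by split.
apply/integrableP; split; first exact: measurable_flogp Hf.
rewrite (eq_integral _ _ (fun x _ => gee0_abs (flogp_ge0 Hf x))).
exact: le_lt_trans bound fin.
Qed.
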